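(* Let $H$ be a connected graph of order $a \in \mathbb{N}$. Then for every $b \in \mathbb{N}$, \[1 + (a-1)(b-2) \le R_\mathrm{cyc}(H, P_b^\mathrm{mon}) \le 1 + (a-1)(b-1).\]
   Context: All graphs are finite, simple and undirected, and a graph of order $n$ has vertex set $\{0,1,\ldots,n-1\}$; $K_n$ is the complete graph on $\{0,\ldots,n-1\}$. A $2$-edge-coloring of $K_n$ assigns each edge a color in $\{1,2\}$. For a graph $H$ and such a coloring, an embedding of $H$ in color $j$ is an injective map $\varphi\colon V(H)\to V(K_n)$ such that for every edge $uv$ of $H$ the edge $\{\varphi(u),\varphi(v)\}$ has color $j$; it is increasing up to a cyclic permutation if there exists $t\in V(H)$ such that $(\varphi(t),\varphi(t+1),\ldots,\varphi(|H|-1),\varphi(0),\varphi(1),\ldots,\varphi(t-1))$ is an increasing sequence. The cyclic Ramsey number $R_\mathrm{cyc}(H_1,H_2)$ is the smallest $n\in\mathbb{N}$ such that every $2$-edge-coloring of $K_n$ admits an embedding of $H_1$ in color $1$ or of $H_2$ in color $2$ that is increasing up to a cyclic permutation. The monotone path $P_n^\mathrm{mon}$ is the graph of order $n$ in which two vertices are adjacent iff they are consecutive integers. *)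

From mathcomp Require Import all_boot all_order all_algebra.
Set Implicit Arguments. Unset Strict Implicit. Unset Printing Implicit Defensive.

Definition simple_graph (n : nat) (E : rel 'I_n) : Prop :=
  symmetric E /\ irreflexive E.

Definition connected_graph (n : nat) (E : rel 'I_n) : Prop :=
  forall u v : 'I_n, connect E u v.

Definition Pmon (n : nat) : rel 'I_n :=
  fun i j => ((val i).+1 == val j) || ((val j).+1 == val i).

(* A 2-edge-colouring of K_n: colour c i j in {1,2} of the edge {i,j}
   (i <> j); symmetric, so it is a colouring of unordered edges. *)
Definition two_coloring (n : nat) (c : 'I_n -> 'I_n -> nat) : Prop :=
  (forall i j : 'I_n, i != j -> c i j = c j i) /\
  (forall i j : 'I_n, i != j -> c i j \in [:: 1; 2]).

Definition embedding_in_color (a n : nat) (E : rel 'I_a)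
    (c : 'I_n -> 'I_n -> nat) (j : nat) (phi : 'I_a -> 'I_n) : Prop :=
  injective phi /\ (forall u v : 'I_a, E u v -> c (phi u) (phi v) = j).

(* phi is increasing up to a cyclic permutation: for some t in V(H),
   (phi t, ..., phi (a-1), phi 0, ..., phi (t-1)) is increasing. *)
Definition cyc_increasing (a n : nat) (phi : 'I_a -> 'I_n) : Prop :=
  exists t : 'I_a,
    sorted ltn [seq val (phi k) | k <- rot t (enum 'I_a)].

Definition has_cyc_embedding (a n : nat) (E : rel 'I_a)
    (c : 'I_n -> 'I_n -> nat) (j : nat) : Prop :=
  exists phi : 'I_a -> 'I_n,
    embedding_in_color E c j phi /\ cyc_increasing phi.

Definition cyc_arrows (a1 a2 : nat) (E1 : rel 'I_a1) (E2 : rel 'I_a2)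
    (n : nat) : Prop :=
  forall c : 'I_n -> 'I_n -> nat, two_coloring c ->
    has_cyc_embedding E1 c 1 \/ has_cyc_embedding E2 c 2.

Definition is_Rcyc (a1 a2 : nat) (E1 : rel 'I_a1) (E2 : rel 'I_a2)
    (r : nat) : Prop :=
  cyc_arrows E1 E2 r /\ (forall n, n < r -> ~ cyc_arrows E1 E2 n).

(* Upper bound: in a 2-colouring of K_N, N = 1 + (a-1)(b-1), repeatedly strip
   the vertices that are not the right end of an increasing colour-2 edge.  Each
   stripped layer is a colour-1 clique, so either a layer has a vertices, into
   which H embeds increasingly, or b layers are nonempty and yield an increasing
   colour-2 path on b vertices.
   Lower bound: for n <= (a-1)(b-2), colour 1 inside consecutive blocks of a-1
   vertices and 2 between blocks.  A connected colour-1 copy of H stays in one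
   block, which is too small.  Along a cyclically increasing colour-2 copy of P_b
   the block index never decreases and, among the b-1 steps of the cyclic order,
   all but the wrap-around are path edges and change block; hence b-1 blocks
   would be needed, but there are at most b-2. *)

From mathcomp Require Import all_boot all_order all_algebra.
From mathcomp Require Import zify.
From Stdlib Require Import ClassicalEpsilon.
Set Implicit Arguments. Unset Strict Implicit. Unset Printing Implicit Defensive.
Import GRing.Theory Num.Theory.

Lemma ex_is_Rcyc (a1 a2 : nat) (E1 : rel 'I_a1) (E2 : rel 'I_a2) (N : nat) :
  cyc_arrows E1 E2 N -> exists2 r, is_Rcyc E1 E2 r & (r <= N)%N.
Proof.
move=> arr_N.
pose P n := if excluded_middle_informative (cyc_arrows E1 E2 n) then true else false.
have PP n : reflect (cyc_arrows E1 E2 n) (P n).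
  by rewrite /P; case: excluded_middle_informative => H; constructor.
have [r /PP arr_r r_min] := ex_minnP (ex_intro P N (introT (PP N) arr_N)).
exists r; last exact/r_min/PP.
split=> // n lt_nr /PP /r_min; lia.
Qed.

Definition mono_clique (n : nat) (c : 'I_n -> 'I_n -> nat) (j : nat)
    (Y : {set 'I_n}) : Prop :=
  {in Y &, forall u v : 'I_n, (u < v)%N -> c u v = j}.

Definition mono_inc_path (n : nat) (c : 'I_n -> 'I_n -> nat) (j : nat)
    (s : seq 'I_n) : Prop :=
  sorted (fun u v : 'I_n => (u < v)%N && (c u v == j)) s.

Lemma clique_or_inc_path (n a : nat) (c : 'I_n -> 'I_n -> nat) :
  (forall i j : 'I_n, i != j -> c i j \in [:: 1; 2]) ->
  forall (m : nat) (X : {set 'I_n}), ((a - 1) * m < #|X|)%N ->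
  (exists2 Y : {set 'I_n}, (a <= #|Y|)%N & mono_clique c 1 Y) \/
  (exists s : seq 'I_n, [/\ size s = m.+1, mono_inc_path c 2 s & {subset s <= X}]).
Proof.
move=> c12; elim=> [|m IH] X card_X.
  have /card_gt0P [x xX] : (0 < #|X|)%N by lia.
  by right; exists [:: x]; split=> // y; rewrite inE => /eqP ->.
pose A := [set v in X | [forall u in X, (u < v)%N ==> (c u v != 2)]].
have sub_AX : A \subset X by apply/subsetP => v; rewrite inE => /andP [].
have [le_aA | lt_Aa] := leqP a #|A|.
  left; exists A => // u v /(subsetP sub_AX) uX.
  rewrite inE => /andP [_ /forall_inP /(_ u uX)] /implyP v_src lt_uv.
  have := c12 u v; rewrite neq_ltn lt_uv !inE (negbTE (v_src lt_uv)) orbF.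
  by move=> /(_ isT) /eqP.
have card_XA : ((a - 1) * m < #|X :\: A|)%N by rewrite cardsD (setIidPr sub_AX); lia.
have [clique | [[|w s] [size_s path_s sub_s]]] := IH _ card_XA; [by left | by [] |].
have /setDP [wX wA] := sub_s w (mem_head w s).
have [u uX uw] : exists2 u, u \in X & (u < w)%N && (c u w == 2).
  move: wA; rewrite inE wX /= negb_forall => /existsP [u].
  by rewrite negb_imply negb_imply negbK => /andP [uX uw]; exists u.
right; exists [:: u, w & s]; split=> //=; first by rewrite -size_s.
  by rewrite /mono_inc_path /= uw.
by move=> y /[!inE] /orP [/eqP -> // | /sub_s /setDP []].
Qed.

Lemma sorted_enum_ord_set (n : nat) (Y : {set 'I_n}) :
  sorted (fun u v : 'I_n => (u < v)%N) (enum Y).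
Proof.
rewrite /enum_mem -enumT; apply: sorted_filter; first exact: ltn_trans.
by have := iota_ltn_sorted 0 n; rewrite -val_enum_ord sorted_map.
Qed.

Section SortedSeqEmbedding.

Variables (m n : nat) (x0 : 'I_n) (s : seq 'I_n).
Hypotheses (m_gt0 : (0 < m)%N) (size_s : size s = m)
  (sorted_s : sorted (fun u v : 'I_n => (u < v)%N) s).

Lemma nth_sorted_injective : injective (fun k : 'I_m => nth x0 s k).
Proof.
move=> i j /eqP; rewrite nth_uniq ?size_s // => [/eqP/val_inj //|].
by apply: sorted_uniq sorted_s; [exact: ltn_trans | exact: ltnn].
Qed.

Lemma nth_sorted_cyc_increasing : cyc_increasing (fun k : 'I_m => nth x0 s k).
Proof.
exists (Ordinal m_gt0); rewrite rot0.
have -> : [seq val (nth x0 s k) | k : 'I_m <- enum 'I_m] =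
          map val (map (nth x0 s) (map val (enum 'I_m))) by rewrite -!map_comp.
by rewrite val_enum_ord -size_s -/(mkseq _ _) mkseq_nth sorted_map.
Qed.

End SortedSeqEmbedding.

Lemma clique_cyc_embedding (a n : nat) (E : rel 'I_a) (c : 'I_n -> 'I_n -> nat)
    (Y : {set 'I_n}) :
  (0 < a)%N -> irreflexive E -> (forall i j, i != j -> c i j = c j i) ->
  (a <= #|Y|)%N -> mono_clique c 1 Y -> has_cyc_embedding E c 1.
Proof.
move=> a_gt0 E_irr c_sym le_aY clique.
have [x0 _] : exists x0, x0 \in Y by apply/card_gt0P; lia.
set s := take a (enum Y).
have size_s : size s = a by rewrite size_take -cardE; case: ltnP; lia.
have sorted_s := take_sorted a (sorted_enum_ord_set Y).
have phi_inj := nth_sorted_injective (x0 := x0) size_s sorted_s.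
exists (fun k : 'I_a => nth x0 s k); split; last exact: nth_sorted_cyc_increasing.
split=> // u v Euv.
have phiY (k : 'I_a) : nth x0 s k \in Y.
  by rewrite -mem_enum; apply: (@mem_take a); apply: mem_nth; rewrite size_s.
have ne_uv : u != v by apply: contraTneq Euv => ->; rewrite E_irr.
have ne_phi : nth x0 s u != nth x0 s v by apply: contra ne_uv => /eqP /phi_inj ->.
case: (ltngtP (nth x0 s u) (nth x0 s v)) => [lt_uv | lt_vu | eq_uv].
- exact: clique.
- by rewrite c_sym // clique.
- by rewrite (val_inj eq_uv) eqxx in ne_phi.
Qed.

Lemma inc_path_cyc_embedding (b n : nat) (c : 'I_n -> 'I_n -> nat) (s : seq 'I_n) :
  (0 < b)%N -> (forall i j, i != j -> c i j = c j i) ->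
  size s = b -> mono_inc_path c 2 s -> has_cyc_embedding (@Pmon b) c 2.
Proof.
case: s => [|x0 s'] b_gt0 c_sym size_s path_s; first by rewrite -size_s in b_gt0.
set s := x0 :: s' in size_s path_s.
have sorted_s : sorted (fun u v : 'I_n => (u < v)%N) s.
  by apply: sub_sorted path_s => u v /andP [].
have phi_inj := nth_sorted_injective (x0 := x0) size_s sorted_s.
exists (fun k : 'I_b => nth x0 s k); split; last exact: nth_sorted_cyc_increasing.
have step (u v : 'I_b) : (val u).+1 = val v -> c (nth x0 s u) (nth x0 s v) = 2.
  move=> uv; move/(sortedP x0): path_s => /(_ u); rewrite size_s uv.
  by move=> /(_ (ltn_ord v)) /andP [_ /eqP].
split=> // u v /orP [/eqP /step // | /eqP vu].
rewrite c_sym ?step //; apply/eqP => /phi_inj uv.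
by move: vu; rewrite uv; lia.
Qed.

Lemma cyc_arrows_upper (a b : nat) (E : rel 'I_a) :
  (0 < a)%N -> (0 < b)%N -> irreflexive E ->
  cyc_arrows E (@Pmon b) (1 + (a - 1) * (b - 1)).
Proof.
move=> a_gt0 b_gt0 E_irr c [c_sym c12].
have card_T : ((a - 1) * (b - 1) < #|[set: 'I_(1 + (a - 1) * (b - 1))]|)%N.
  by rewrite cardsT card_ord.
have [[Y le_aY clique] | [s [size_s path_s _]]] := clique_or_inc_path c12 card_T.
  by left; apply: clique_cyc_embedding clique.
by right; apply: inc_path_cyc_embedding path_s => //; lia.
Qed.

Lemma rot_enum_ord_nth (b : nat) (t : 'I_b) (p : nat) : (p < b)%N ->
  val (nth t (rot t (enum 'I_b)) p) = (t + p) %% b.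
Proof.
move=> lt_pb; have lt_tb := ltn_ord t.
rewrite -(nth_map t 0 val) ?size_rot ?size_enum_ord // map_rot val_enum_ord.
rewrite /rot drop_iota take_iota nth_cat size_iota add0n.
case: ltnP => [lt_p | le_p]; first by rewrite nth_iota // modn_small; lia.
rewrite nth_iota; last lia.
have -> : t + p = p - (b - t) + b by lia.
by rewrite modnDr modn_small; lia.
Qed.

(* [w] lists the vertices in the cyclic order starting at [t]; [e] is the
   position of the wrap-around from b-1 to 0. *)
Lemma cyc_increasing_steps (b n : nat) (phi : 'I_b -> 'I_n) :
  cyc_increasing phi ->
  exists (w : nat -> 'I_b) (e : nat), forall p, (p.+1 < b)%N ->
    (phi (w p) < phi (w p.+1))%N /\ (p != e -> (val (w p)).+1 = val (w p.+1)).
Proof.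
move=> [t sorted_t]; have lt_tb := ltn_ord t.
exists (nth t (rot t (enum 'I_b))), (b - t.+1) => p lt_pb; split.
  move/(sortedP 0): sorted_t => /(_ p).
  by rewrite size_map size_rot size_enum_ord !(nth_map t) ?size_rot ?size_enum_ord //;
    [apply | lia].
rewrite !rot_enum_ord_nth; try lia.
move=> ne_pe; case: (ltnP (t + p.+1) b) => [lt_b | le_b].
  by rewrite !modn_small //; lia.
have -> : t + p.+1 = (t + p.+1 - b) + b by lia.
have -> : t + p = (t + p - b) + b by lia.
by rewrite !modnDr !modn_small; lia.
Qed.

Lemma nondecr_strict_but_one (g : nat -> nat) (e m : nat) :
  (forall p, (p < m)%N -> (g p <= g p.+1)%N) ->
  (forall p, (p < m)%N -> p != e -> (g p < g p.+1)%N) ->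
  (g 0 + m <= g m + (e < m))%N.
Proof.
elim: m => [|m IH] le_g lt_g; first by lia.
have := IH (fun p lt_pm => le_g p (ltnW lt_pm)) (fun p lt_pm => lt_g p (ltnW lt_pm)).
have := le_g m (ltnSn m); case: (eqVneq m e) => [<- | ne_me].
  by rewrite ltnn ltnSn; lia.
have -> : (e < m.+1) = (e < m) by rewrite ltnS leq_eqVlt eq_sym (negbTE ne_me).
have := lt_g m (ltnSn m) ne_me; lia.
Qed.

Definition block_coloring (n d : nat) (i j : 'I_n) : nat :=
  if i %/ d == j %/ d then 1 else 2.
Arguments block_coloring : clear implicits.

Lemma block_coloring_two (n d : nat) : two_coloring (block_coloring n d).
Proof. by split=> i j _; rewrite /block_coloring; [rewrite eq_sym | case: ifP]. Qed.

Lemma block_coloring_no_connected (a n d : nat) (E : rel 'I_a) :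
  (0 < d < a)%N -> connected_graph E -> ~ has_cyc_embedding E (block_coloring n d) 1.
Proof.
move=> /andP [d0 lt_da] Econ [phi [[phi_inj phiE] _]].
pose u0 : 'I_a := Ordinal (leq_ltn_trans (leq0n d) lt_da).
have same_block u : phi u %/ d = phi u0 %/ d.
  have E_closed : closed E [pred v | phi v %/ d == phi u0 %/ d].
    by move=> x y /phiE; rewrite /block_coloring !inE; case: eqP => // ->.
  by have := closed_connect E_closed (Econ u0 u); rewrite !inE eqxx => /esym/eqP.
pose rem u : 'I_d := Ordinal (ltn_pmod (phi u) d0).
have rem_inj : injective rem.
  move=> u v /(congr1 val) /= eq_mod; apply/phi_inj/val_inj.
  by rewrite /= (divn_eq (phi u) d) (divn_eq (phi v) d) eq_mod !same_block.
by have := leq_card rem rem_inj; rewrite !card_ord; lia.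
Qed.

Lemma block_coloring_no_cyc_path (n d b : nat) :
  (0 < d)%N -> (n <= d * (b - 2))%N ->
  ~ has_cyc_embedding (@Pmon b) (block_coloring n d) 2.
Proof.
move=> d0 le_n [phi [[_ phiE] /cyc_increasing_steps [w [e steps]]]].
pose g p := phi (w p) %/ d.
have lt_g_last : (g b.-1 < b - 2)%N.
  by rewrite /g ltn_divLR // mulnC; apply: leq_trans le_n; apply: ltn_ord.
have le_g p : (p < b.-1)%N -> (g p <= g p.+1)%N.
  by move=> lt_p; apply/leq_div2r/ltnW; apply: (steps p _).1; lia.
have lt_g p : (p < b.-1)%N -> p != e -> (g p < g p.+1)%N.
  move=> lt_p ne_pe; have [_ /(_ ne_pe) adj] := steps p ltac:(lia).
  have /phiE : Pmon (w p) (w p.+1) by rewrite /Pmon adj eqxx.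
  rewrite /block_coloring -/(g p) -/(g p.+1) ltn_neqAle le_g // andbT.
  by case: eqP.
have := @nondecr_strict_but_one g e b.-1 le_g lt_g; lia.
Qed.

Lemma not_cyc_arrows_lower (a b : nat) (E : rel 'I_a) (n : nat) :
  (0 < a)%N -> connected_graph E -> (n <= (a - 1) * (b - 2))%N ->
  ~ cyc_arrows E (@Pmon b) n.
Proof.
move=> a_gt0 E_conn le_n /(_ _ (block_coloring_two n (a - 1))).
have [-> | n_gt0] := posnP n.
  by case=> [[phi _] | [phi [_ [t _]]]]; [case: (phi (Ordinal a_gt0)) | case: (phi t)].
have d_gt0 : (0 < a - 1)%N by move: le_n; case: (a - 1); lia.
case; first by apply: block_coloring_no_connected E_conn; lia.
exact: block_coloring_no_cyc_path le_n.
Qed.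

Theorem theorem4p5 (a : nat) (E : rel 'I_a) (b : nat) :
  (1 <= a)%N -> (1 <= b)%N ->
  simple_graph E -> connected_graph E ->
  exists r : nat, is_Rcyc E (@Pmon b) r /\
    ((1 + (a%:Z - 1) * (b%:Z - 2) <= r%:Z)%R /\
     (r%:Z <= 1 + (a%:Z - 1) * (b%:Z - 1))%R).
Proof.
move=> a_gt0 b_gt0 [_ E_irr] E_conn.
have [r [arr_r r_min] le_r] := ex_is_Rcyc (cyc_arrows_upper a_gt0 b_gt0 E_irr).
have lt_r : ((a - 1) * (b - 2) < r)%N.
  rewrite ltnNge; apply/negP => le_r'.
  exact: not_cyc_arrows_lower a_gt0 E_conn le_r' arr_r.
by exists r; split=> //; nia.
Qed.
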